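(* Let $\mathbb{F}_q$ be a finite field, $e\ge1$, and let $t\ge 2$ be an integer. Let $a\in\mathbb{F}_{q^e}^*$ have multiplicative order $o_a\ge t$. Let $f_{a,t}\in\mathbb{F}_q[x]$ be the product of the distinct polynomials among the minimal polynomials over $\mathbb{F}_q$ of $a^0,a^1,\dots,a^{t-1}$. Then the least-degree $t$-sparse multiple of $f_{a,t}$ in $\mathbb{F}_q[x]$ is $x^{o_a}-1$; that is, $f_{a,t}$ divides $x^{o_a}-1$, and every nonzero $t$-sparse multiple of $f_{a,t}$ in $\mathbb{F}_q[x]$ has degree at least $o_a$.
   Context: A polynomial is $t$-sparse if it has at most $t$ nonzero coefficients in the power basis. The multiplicative order of $a$ is the least positive integer $m$ with $a^m=1$. *)

From HB Require Import structures.
From mathcomp Require Import all_boot all_order all_algebra falgebra fieldext finfield.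
Set Implicit Arguments. Unset Strict Implicit. Unset Printing Implicit Defensive.
Import GRing.Theory.
Local Open Scope ring_scope.

Definition sparse (R : nzRingType) (t : nat) (p : {poly R}) : bool :=
  (count (fun c : R => c != 0%R) (polyseq p) <= t)%N.

Definition f_at (F : fieldType) (L : fieldExtType F) (a : L) (t : nat) : {poly L} :=
  \prod_(p <- undup [seq minPoly 1%VS (a ^+ i) | i <- iota 0 t]) p.

From HB Require Import structures.
From mathcomp Require Import all_boot all_order all_algebra falgebra fieldext finfield.
Import GRing.Theory.
Local Open Scope ring_scope.

(* The divisibility [f_{a,t} | x^o - 1] holds because the minimal polynomials
   of the powers of [a] are pairwise coprime divisors of [x^o - 1].
   For the degree bound, let [g] be a multiple of [f_{a,t}] of degree [m < o]
   with at most [t] nonzero coefficients, so that [g] vanishes at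
   [a^0, ..., a^(t-1)]. Let [P] be the polynomial of degree [< t] whose roots
   are the [a^j] for the exponents [j < m] of the nonzero coefficients of [g].
   Exchanging the two sums in [sum_i P_i g(a^i) = sum_j g_j P(a^j)], the left
   side is [0] while the right side reduces to [g_m P(a^m)], which is nonzero
   because [a^m] differs from every [a^j] with [j < m < o]. *)

Lemma dvdp_prod_mem (R : idomainType) (s : seq {poly R}) (q : {poly R}) :
  q \in s -> q %| \prod_(p <- s) p.
Proof. by move=> qs; rewrite (big_rem q) //= dvdp_mulIl. Qed.

Lemma coprimep_prodr (R : idomainType) (p : {poly R}) (s : seq {poly R}) :
  all (coprimep p) s -> coprimep p (\prod_(q <- s) q).
Proof.
elim: s => [|q s IHs] /=; first by rewrite big_nil coprimep1.
by case/andP=> pq ps; rewrite big_cons coprimepMr pq IHs.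
Qed.

Lemma dvdp_prod_uniq (R : idomainType) (s : seq {poly R}) (h : {poly R}) :
  uniq s -> {in s &, forall p q, p != q -> coprimep p q} ->
  all (fun q => q %| h) s -> \prod_(q <- s) q %| h.
Proof.
elim: s => [|p s IHs] /=; first by rewrite big_nil dvd1p.
case/andP=> ps us cop /andP[ph sh].
have cop_s : {in s &, forall p q, p != q -> coprimep p q}.
  by move=> q r qs rs; apply: cop; rewrite inE ?qs ?rs orbT.
rewrite big_cons Gauss_dvdp ?ph ?IHs //.
apply/coprimep_prodr/allP=> q qs; apply: cop; rewrite ?inE ?eqxx ?qs ?orbT //.
by apply: contraNneq ps => ->.
Qed.

Lemma minPoly_coprimep (F : fieldType) (L : fieldExtType F) (K : {subfield L})
    (x y : L) :
  minPoly K x != minPoly K y -> coprimep (minPoly K x) (minPoly K y).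
Proof.
move=> neq_xy.
have K_gcd : gcdp (minPoly K x) (minPoly K y) \is a polyOver K.
  by rewrite gcdp_polyOver ?minPolyOver.
have /orP[gcd_x|gcd_1] := minPoly_irr K_gcd (dvdp_gcdl _ _); last first.
  by rewrite coprimep_def (eqp_size gcd_1) size_poly1.
have x_dvd_y : minPoly K x %| minPoly K y by rewrite -(eqp_dvdl _ gcd_x) dvdp_gcdr.
have /orP[eq_xy|eq_x1] := minPoly_irr (minPolyOver K x) x_dvd_y.
  by rewrite eqp_monic ?monic_minPoly // (negPf neq_xy) in eq_xy.
by move: (root_minPoly K x); rewrite (eqp_root eq_x1) (negPf (root1 _)).
Qed.

Lemma count_coef_neq0 (R : nzRingType) (g : {poly R}) :
  count (fun c : R => c != 0) g = count (fun j => g`_j != 0) (iota 0 (size g)).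
Proof. by rewrite -{1}(mkseq_nth 0 g) /mkseq count_map. Qed.

Lemma sum_coef_horner_exp (R : comNzRingType) (P g : {poly R}) (x : R) (t : nat) :
  (size P <= t)%N ->
  \sum_(i < t) P`_i * g.[x ^+ i] = \sum_(j < size g) g`_j * P.[x ^+ j].
Proof.
move=> szP; apply/esym.
under eq_bigr => j _ do rewrite (horner_coef_wide _ szP) big_distrr.
rewrite exchange_big /=; apply: eq_bigr => i _.
rewrite horner_coef big_distrr; apply: eq_bigr => j _ /=.
by rewrite mulrCA -!exprM mulnC.
Qed.

Section SparseMultiple.
Variables (R : idomainType) (a : R) (o : nat).
Hypothesis a_neq0 : a != 0.
Hypothesis a_order : forall m : nat, (0 < m)%N -> (m < o)%N -> a ^+ m != 1.

Lemma expf_neq_lt_order (k m : nat) : (k < m)%N -> (m < o)%N -> a ^+ m != a ^+ k.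
Proof.
move=> lt_km lt_mo; apply/eqP=> eq_mk.
have /eqP : a ^+ (m - k) != 1.
  by apply: a_order; rewrite ?subn_gt0 // (leq_ltn_trans (leq_subr k m)).
apply.
apply: (mulfI (expf_neq0 k a_neq0)).
by rewrite -exprD subnKC ?(ltnW lt_km) // mulr1.
Qed.

Lemma sparse_vanishing_size (t : nat) (g : {poly R}) :
  g != 0 -> (forall i, (i < t)%N -> g.[a ^+ i] = 0) -> sparse t g ->
  (o <= (size g).-1)%N.
Proof.
move=> g_neq0 g_root sp_g; rewrite leqNgt; apply/negP => lt_mo.
set m := (size g).-1.
have size_g : size g = m.+1 by rewrite prednK // lt0n size_poly_eq0.
have lead_neq0 : g`_m != 0 by rewrite -lead_coefE lead_coef_eq0.
pose exps := [seq j <- iota 0 m | g`_j != 0].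
pose P := \prod_(b <- [seq a ^+ k | k <- exps]) ('X - b%:P).
have size_P : (size P <= t)%N.
  move: sp_g; rewrite /sparse count_coef_neq0 size_g -addn1 iotaD count_cat /=.
  by rewrite add0n lead_neq0 addn1 size_prod_XsubC size_map size_filter.
have P_root j : (j < m)%N -> g`_j != 0 -> P.[a ^+ j] = 0.
  move=> lt_jm gj_neq0; apply/rootP; rewrite root_prod_XsubC map_f //.
  by rewrite mem_filter gj_neq0 mem_iota.
have := @sum_coef_horner_exp R P g a t size_P.
rewrite big1 => [|i lt_it]; last by rewrite g_root // mulr0.
rewrite size_g big_ord_recr /= big1 ?add0r => [|j _]; last first.
  by have [->|gj_neq0] := eqVneq g`_j 0; rewrite ?mul0r // P_root ?mulr0.
move/esym/eqP; rewrite mulf_eq0 (negPf lead_neq0) /= => /eqP/rootP.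
rewrite /P root_prod_XsubC => /mapP[k]; rewrite mem_filter mem_iota /=.
by case/andP=> _ lt_km /eqP; apply/negP/expf_neq_lt_order.
Qed.

End SparseMultiple.

Theorem theorem5p1 (F : finFieldType) (L : fieldExtType F) (t : nat) (a : L) (o : nat)
  (ht : (2 <= t)%N) (ha : a != 0)
  (ho_pos : (0 < o)%N) (ho : a ^+ o = 1)
  (ho_min : forall m : nat, (0 < m)%N -> (m < o)%N -> a ^+ m != 1)
  (hto : (t <= o)%N) :
  f_at a t %| ('X^o - 1) /\
  forall g : {poly L}, g \is a polyOver 1%VS -> g != 0 -> f_at a t %| g ->
    sparse t g -> (o <= (size g).-1)%N.
Proof.
split.
  apply: dvdp_prod_uniq; rewrite ?undup_uniq //.
    by move=> p q /[!mem_undup] /mapP[i _ ->] /mapP[j _ ->]; apply: minPoly_coprimep.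
  apply/allP=> p /[!mem_undup] /mapP[i _ ->].
  apply: minPoly_dvdp; first by rewrite polyOverXnsubC mem1v.
  by rewrite /root !hornerE -exprM mulnC exprM ho expr1n subrr.
move=> g _ g_neq0 f_dvd_g.
apply: (@sparse_vanishing_size _ a o ha ho_min t g g_neq0) => i lt_it.
apply/rootP/(root_dvdp _ (root_minPoly 1%VS (a ^+ i)))/(dvdp_trans _ f_dvd_g).
by apply: dvdp_prod_mem; rewrite mem_undup; apply/mapP; exists i; rewrite ?mem_iota.
Qed.
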